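(* Let $n\geq1$, $p<-n-1$, $\gamma=\frac{p+n+1}{n+1}<0$, and $\psi(r)=\frac{(1+r^2)^{\frac{n+1}{2}}}{r^n}$ for $r>0$. Let $\varphi:[0,\infty)\to[0,\infty)$ be continuous, positive on $(0,\infty)$, with $\lim_{r\to\infty}\varphi(r)=\varphi_\infty\in(0,\infty)$, and decaying to zero rapidly as $r\to0$, in the sense that $M:=\int_0^1\frac{\varphi(r)}{r}\psi(r)^{-\gamma}\,dr<\infty$. Let $\beta>M$ and define $$f(r)=\psi(r)^{\gamma}\Big[\int_1^r\frac{\varphi(s)}{s}\psi(s)^{-\gamma}\,ds+\beta\Big],\qquad r\in(0,\infty).$$ Then $f$ is $C^1$ on $(0,\infty)$, $f(r)>0$ for all $r\in(0,\infty)$, $\lim_{r\to0}f(r)=0$ (so $f$ extends continuously with $f(0)=0$), and $\lim_{r\to\infty}f(r)=\frac{\varphi_\infty}{|\gamma|}$. *)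

From Stdlib Require Import Reals.
From Coquelicot Require Import Coquelicot.
Open Scope R_scope.

Definition gam (n : nat) (p : R) : R := (p + INR n + 1) / (INR n + 1).

Definition psi (n : nat) (r : R) : R :=
  Rpower (1 + r ^ 2) ((INR n + 1) / 2) / r ^ n.

Definition integrand (n : nat) (p : R) (phi : R -> R) (s : R) : R :=
  phi s / s * Rpower (psi n s) (- gam n p).

Definition fdef (n : nat) (p : R) (phi : R -> R) (beta : R) (r : R) : R :=
  Rpower (psi n r) (gam n p) * (RInt (integrand n p phi) 1 r + beta).

(** The substitution [f = (F + beta) / H] with [F r = int_1^r phi(s)/s psi(s)^(-gamma) ds]
    and [H = psi^(-gamma)] reduces everything to properties of [ln psi].
    Positivity: the integral from [0] to [r] of the positive integrand is [M + F r >= 0],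
    so [F r + beta >= beta - M > 0].  At [0]: [0 < F r + beta <= beta] for [r <= 1], while
    [psi(r) >= 1/r] (this needs [n >= 1]) gives [psi(r)^gamma <= r^|gamma| -> 0].
    At infinity: [H -> +oo], and a L'Hopital rule for [F / H] applies since
    [F' / H' = phi(r) (1 + r^2) / (|gamma| (r^2 - n)) -> phi_oo / |gamma|]. *)

From Stdlib Require Import Reals Lra Psatz.
From Coquelicot Require Import Coquelicot.
Open Scope R_scope.

Lemma le_of_is_derive_pos (G dG : R -> R) (a : R) :
  (forall x, a <= x -> is_derive G x (dG x)) ->
  (forall x, a <= x -> 0 < dG x) ->
  forall x, a <= x -> G a <= G x.
Proof.
  intros HG Hpos x Hx.
  destruct (Req_dec a x) as [<- | Hax]; [lra |].
  apply Rlt_le, (incr_function_le G a p_infty dG); simpl; try lra.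
  - intros y Hy _; now apply HG.
  - intros y Hy _; now apply Hpos.
Qed.

Lemma Rabs_increment_le_of_derive_ratio (F H dF dH : R -> R) (a l e : R) :
  (forall x, a <= x -> is_derive F x (dF x) /\ is_derive H x (dH x) /\
                       0 < dH x /\ Rabs (dF x / dH x - l) < e) ->
  forall x, a <= x -> Rabs (F x - F a - l * (H x - H a)) <= e * (H x - H a).
Proof.
  intros Hd x Hx.
  assert (Hlow : F a - (l - e) * H a <= F x - (l - e) * H x).
  { apply (le_of_is_derive_pos (fun y => F y - (l - e) * H y)
                               (fun y => dF y - (l - e) * dH y)); [| | exact Hx].
    - intros y Hy. destruct (Hd y Hy) as (DF & DH & _).
      apply (is_derive_minus F); [exact DF | apply is_derive_scal, DH].
    - intros y Hy. destruct (Hd y Hy) as (_ & _ & Hpos & Hq). apply Rabs_def2 in Hq.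
      replace (dF y) with (dF y / dH y * dH y) by (field; lra). nra. }
  assert (Hup : (l + e) * H a - F a <= (l + e) * H x - F x).
  { apply (le_of_is_derive_pos (fun y => (l + e) * H y - F y)
                               (fun y => (l + e) * dH y - dF y)); [| | exact Hx].
    - intros y Hy. destruct (Hd y Hy) as (DF & DH & _).
      apply (is_derive_minus (fun z => (l + e) * H z)); [apply is_derive_scal, DH | exact DF].
    - intros y Hy. destruct (Hd y Hy) as (_ & _ & Hpos & Hq). apply Rabs_def2 in Hq.
      replace (dF y) with (dF y / dH y * dH y) by (field; lra). nra. }
  apply Rabs_le. lra.
Qed.

Lemma is_lim_div_p_infty_of_derive (F H dF dH : R -> R) (l : R) :
  Rbar_locally p_infty
    (fun x => is_derive F x (dF x) /\ is_derive H x (dH x) /\ 0 < dH x) ->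
  is_lim H p_infty p_infty ->
  is_lim (fun x => dF x / dH x) p_infty l ->
  is_lim (fun x => F x / H x) p_infty l.
Proof.
  intros [A HA] HH Hl. apply is_lim_spec. intros eps.
  set (e := eps / 2). assert (He : 0 < e) by (unfold e; destruct eps; simpl; lra).
  apply is_lim_spec in Hl. destruct (Hl (mkposreal e He)) as [B HB]. simpl in HB.
  set (a := Rmax A B + 1).
  assert (Hinc : forall x, a <= x -> Rabs (F x - F a - l * (H x - H a)) <= e * (H x - H a)).
  { apply Rabs_increment_le_of_derive_ratio with dF dH.
    intros x Hx. pose proof (Rmax_l A B). pose proof (Rmax_r A B).
    destruct (HA x) as (? & ? & ?); [unfold a in Hx; lra |].
    do 3 (split; auto). apply HB. unfold a in Hx; lra. }
  set (C := e * Rabs (H a) + Rabs (F a - l * H a)).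
  assert (HC : 0 <= C / e).
  { apply Rdiv_le_0_compat; [| exact He].
    pose proof (Rabs_pos (H a)). pose proof (Rabs_pos (F a - l * H a)). unfold C; nra. }
  apply is_lim_spec in HH. destruct (HH (C / e)) as [N HN].
  exists (Rmax a N). intros x Hx. pose proof (Rmax_l a N). pose proof (Rmax_r a N).
  specialize (HN x ltac:(lra)). specialize (Hinc x ltac:(lra)).
  assert (HCe : C < e * H x) by (replace C with (e * (C / e)) by (field; lra); nra).
  replace (F x / H x - l) with ((F x - l * H x) / H x) by (field; lra).
  rewrite Rabs_div, (Rabs_pos_eq (H x)) by lra.
  apply Rlt_div_l; [lra |].
  pose proof (Rle_abs (F x - F a - l * (H x - H a))).
  pose proof (Rle_abs (- (F x - F a - l * (H x - H a)))).
  pose proof (Rle_abs (H a)). pose proof (Rle_abs (- H a)).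
  pose proof (Rle_abs (F a - l * H a)). pose proof (Rle_abs (- (F a - l * H a))).
  rewrite !Rabs_Ropp in *. unfold C, e in *. apply Rabs_def1; nra.
Qed.

Lemma filterlim_scal_exp_mul_ln_0 (a c : R) : 0 < a ->
  filterlim (fun r => c * exp (a * ln r)) (at_right 0) (locally 0).
Proof.
  intros Ha.
  assert (Hlin : is_lim (fun y => a * y) m_infty m_infty).
  { replace m_infty with (Rbar_mult a m_infty) at 2.
    - apply is_lim_scal_l, is_lim_id.
    - rewrite Rbar_mult_comm. now apply is_Rbar_mult_unique, is_Rbar_mult_m_infty_pos. }
  assert (Hexp : is_lim (fun y => c * exp (a * y)) m_infty 0).
  { replace (Finite 0) with (Rbar_mult c 0) by (simpl; f_equal; ring).
    apply is_lim_scal_l.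
    apply (is_lim_comp exp (fun y => a * y) m_infty 0 m_infty is_lim_exp_m Hlin).
    exists 0. intros; discriminate. }
  exact (filterlim_comp _ _ _ ln _ _ _ _ is_lim_ln_0 Hexp).
Qed.

Lemma is_lim_sq_ratio (c : R) : is_lim (fun r => (1 + r ^ 2) / (r ^ 2 - c)) p_infty 1.
Proof.
  apply is_lim_ext_loc with (fun r => 1 + (1 + c) * / (r * r - c)).
  { exists (Rabs c + 1). intros r Hr. pose proof (Rle_abs c). pose proof (Rabs_pos c).
    field. nra. }
  assert (Hsq : is_lim (fun r => r * r - c) p_infty p_infty).
  { apply (is_lim_minus _ _ _ p_infty c); [| apply is_lim_const | reflexivity].
    apply (is_lim_mult (fun r => r) (fun r => r) p_infty p_infty p_infty);
      [apply is_lim_id | apply is_lim_id | exact I]. }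
  eapply is_lim_plus;
    [apply is_lim_const | apply is_lim_scal_l, is_lim_inv; [exact Hsq | discriminate] |].
  unfold is_Rbar_plus. simpl. rewrite Rmult_0_r, Rplus_0_r. reflexivity.
Qed.

Lemma is_RInt_gen_at_right_ge_0 (f : R -> R) (a b l : R) : a < b ->
  (forall x, a < x < b -> 0 <= f x) ->
  is_RInt_gen f (at_right a) (at_point b) l -> 0 <= l.
Proof.
  intros Hab Hf Hl. apply Rnot_lt_le. intros Hneg.
  assert (Hnear : filter_prod (at_right a) (at_point b)
                    (fun xy : R * R => a < fst xy < b /\ snd xy = b)).
  { apply (Filter_prod _ _ _ (fun x => a < x < b) (fun y => y = b)); [| reflexivity |].
    - exists (mkposreal (b - a) ltac:(lra)). intros x Hx Hax.
      change (Rabs (x - a) < b - a) in Hx. apply Rabs_def2 in Hx. lra.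
    - intros x y Hx Hy. split; assumption. }
  assert (Hl0 : 0 < - l) by lra. pose (eps := mkposreal (- l) Hl0).
  assert (Hclose : filter_prod (at_right a) (at_point b)
    (fun xy : R * R => exists I, is_RInt f (fst xy) (snd xy) I /\ ball l eps I))
    by exact (Hl _ (locally_ball l eps)).
  destruct (filter_ex _ (filter_and _ _ Hclose Hnear))
    as [[x y] [[I [HI Hball]] [Hx Hy]]].
  cbn [fst snd] in *. subst y.
  assert (HI0 : 0 <= I).
  { rewrite <- (is_RInt_unique _ _ _ _ HI).
    apply RInt_ge_0; [lra | exists I; exact HI | intros z Hz; apply Hf; lra]. }
  change (Rabs (I - l) < - l) in Hball. apply Rabs_def2 in Hball. lra.
Qed.

Section LogPsi.

Variable n : nat.

Definition ln_psi (s : R) : R := (INR n + 1) / 2 * ln (1 + s ^ 2) - INR n * ln s.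

Lemma Rpower_psi (y s : R) : 0 < s -> Rpower (psi n s) y = exp (y * ln_psi s).
Proof.
  intros Hs. unfold Rpower at 1. unfold psi, Rpower, ln_psi. f_equal. f_equal.
  rewrite ln_div, ln_pow, ln_exp; [reflexivity | lra | apply exp_pos | apply pow_lt; lra].
Qed.

Lemma is_derive_exp_ln_psi (c s : R) : 0 < s ->
  is_derive (fun x => exp (c * ln_psi x)) s
    (c * ((s ^ 2 - INR n) / (s * (1 + s ^ 2))) * exp (c * ln_psi s)).
Proof.
  intros Hs. unfold ln_psi. auto_derive.
  - repeat split; nra.
  - replace (s * (s * 1)) with (s ^ 2) by ring. unfold Rminus. field. nra.
Qed.

Lemma ln_le_ln_psi (s : R) : 1 <= s -> ln s <= ln_psi s.
Proof.
  intros Hs. unfold ln_psi. pose proof (pos_INR n).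
  assert (Hsq : ln (s ^ 2) <= ln (1 + s ^ 2)) by (apply ln_le; nra).
  assert (0 <= ln s) by (rewrite <- ln_1; apply ln_le; lra).
  rewrite ln_pow in Hsq by lra. simpl INR in Hsq. nra.
Qed.

Lemma opp_ln_lt_ln_psi (s : R) : (1 <= n)%nat -> 0 < s <= 1 -> - ln s < ln_psi s.
Proof.
  intros Hn Hs. unfold ln_psi.
  assert (1 <= INR n) by (apply (le_INR 1); exact Hn).
  assert (0 < ln (1 + s ^ 2)) by (rewrite <- ln_1; apply ln_increasing; nra).
  assert (ln s <= 0) by (rewrite <- ln_1; apply ln_le; lra).
  nra.
Qed.

End LogPsi.

Lemma gam_neg (n : nat) (p : R) : p < - INR n - 1 -> gam n p < 0.
Proof.
  intros Hp. pose proof (pos_INR n). unfold gam.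
  apply Rmult_neg_pos; [lra | apply Rinv_0_lt_compat; lra].
Qed.

Section Integrand.

Variables (n : nat) (p : R) (phi : R -> R).
Hypothesis phi_cont : forall r, 0 < r -> continuous phi r.
Hypothesis phi_pos : forall r, 0 < r -> 0 < phi r.

Lemma integrand_exp (s : R) : 0 < s ->
  integrand n p phi s = phi s / s * exp (- gam n p * ln_psi n s).
Proof. intros Hs. unfold integrand. now rewrite Rpower_psi. Qed.

Lemma integrand_pos (s : R) : 0 < s -> 0 < integrand n p phi s.
Proof.
  intros Hs. rewrite integrand_exp by exact Hs.
  apply Rmult_lt_0_compat; [apply Rdiv_lt_0_compat; auto | apply exp_pos].
Qed.

Lemma continuous_integrand (s : R) : 0 < s -> continuous (integrand n p phi) s.
Proof.
  intros Hs.
  apply continuous_ext_loc with (fun x => phi x * (/ x * exp (- gam n p * ln_psi n x))).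
  - refine (filter_imp _ _ _ (open_gt 0 s Hs)). intros x Hx.
    rewrite integrand_exp by exact Hx. symmetry. apply Rmult_assoc.
  - apply (continuous_mult (K := R_AbsRing)); [now apply phi_cont |].
    apply (ex_derive_continuous (V := R_NormedModule)). unfold ln_psi.
    auto_derive. repeat split; nra.
Qed.

Lemma ex_RInt_integrand (a b : R) : 0 < a -> 0 < b -> ex_RInt (integrand n p phi) a b.
Proof.
  intros Ha Hb. apply (ex_RInt_continuous (V := R_CompleteNormedModule)).
  intros z [Hz _]. apply continuous_integrand.
  apply Rlt_le_trans with (Rmin a b); [now apply Rmin_glb_lt | exact Hz].
Qed.

Lemma RInt_integrand_ge_0 (a b : R) : 0 < a -> a <= b -> 0 <= RInt (integrand n p phi) a b.
Proof.
  intros Ha Hab. apply RInt_ge_0; [exact Hab | apply ex_RInt_integrand; lra |].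
  intros x Hx. apply Rlt_le, integrand_pos. lra.
Qed.

Lemma RInt_integrand_le_0 (r : R) : 0 < r <= 1 -> RInt (integrand n p phi) 1 r <= 0.
Proof.
  intros Hr.
  rewrite <- (opp_RInt_swap (V := R_CompleteNormedModule)) by (apply ex_RInt_integrand; lra).
  pose proof (RInt_integrand_ge_0 r 1 (proj1 Hr) (proj2 Hr)).
  change (- RInt (integrand n p phi) r 1 <= 0). lra.
Qed.

Lemma opp_le_RInt_integrand (M r : R) :
  is_RInt_gen (integrand n p phi) (at_right 0) (at_point 1) M -> 0 < r ->
  - M <= RInt (integrand n p phi) 1 r.
Proof.
  intros HM Hr.
  assert (H0r : is_RInt_gen (integrand n p phi) (at_right 0) (at_point r)
                  (M + RInt (integrand n p phi) 1 r)).
  { apply (is_RInt_gen_Chasles _ _ _ _ HM), is_RInt_gen_at_point.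
    apply (RInt_correct (V := R_CompleteNormedModule)), ex_RInt_integrand; lra. }
  apply is_RInt_gen_at_right_ge_0 in H0r; [lra | exact Hr |].
  intros x Hx. apply Rlt_le, integrand_pos. lra.
Qed.

Lemma is_derive_RInt_integrand (c r : R) : 0 < r ->
  is_derive (fun x => RInt (integrand n p phi) 1 x + c) r (integrand n p phi r).
Proof.
  intros Hr. rewrite <- (Rplus_0_r (integrand n p phi r)).
  apply (is_derive_plus (V := R_NormedModule));
    [| apply (is_derive_const (V := R_NormedModule))].
  apply (is_derive_RInt (V := R_CompleteNormedModule) _ _ 1).
  - refine (filter_imp _ _ _ (open_gt 0 r Hr)). intros x Hx.
    apply (RInt_correct (V := R_CompleteNormedModule)), ex_RInt_integrand; lra.
  - now apply continuous_integrand.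
Qed.

Variable beta : R.

Lemma fdef_exp (r : R) : 0 < r ->
  fdef n p phi beta r = exp (gam n p * ln_psi n r) * (RInt (integrand n p phi) 1 r + beta).
Proof. intros Hr. unfold fdef. now rewrite Rpower_psi. Qed.

Definition fdef' (r : R) : R :=
  gam n p * ((r ^ 2 - INR n) / (r * (1 + r ^ 2))) * exp (gam n p * ln_psi n r)
    * (RInt (integrand n p phi) 1 r + beta)
  + exp (gam n p * ln_psi n r) * integrand n p phi r.

Lemma is_derive_fdef (r : R) : 0 < r -> is_derive (fdef n p phi beta) r (fdef' r).
Proof.
  intros Hr.
  apply is_derive_ext_loc
    with (fun x => exp (gam n p * ln_psi n x) * (RInt (integrand n p phi) 1 x + beta)).
  { refine (filter_imp _ _ _ (open_gt 0 r Hr)). intros x Hx. symmetry. now apply fdef_exp. }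
  exact (is_derive_mult _ _ r _ _ (is_derive_exp_ln_psi n (gam n p) r Hr)
           (is_derive_RInt_integrand beta r Hr) Rmult_comm).
Qed.

Lemma continuous_Derive_fdef (r : R) : 0 < r -> continuous (Derive (fdef n p phi beta)) r.
Proof.
  intros Hr. apply continuous_ext_loc with fdef'.
  { refine (filter_imp _ _ _ (open_gt 0 r Hr)). intros x Hx.
    symmetry. now apply is_derive_unique, is_derive_fdef. }
  unfold fdef'.
  apply (continuous_plus (V := R_NormedModule)); apply (continuous_mult (K := R_AbsRing)).
  - apply (ex_derive_continuous (V := R_NormedModule)). unfold ln_psi.
    auto_derive. repeat split; nra.
  - apply (ex_derive_continuous (V := R_NormedModule)).
    eexists. now apply is_derive_RInt_integrand.
  - apply (ex_derive_continuous (V := R_NormedModule)).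
    eexists. now apply is_derive_exp_ln_psi.
  - now apply continuous_integrand.
Qed.

Lemma fdef_pos (M r : R) :
  is_RInt_gen (integrand n p phi) (at_right 0) (at_point 1) M -> M < beta -> 0 < r ->
  0 < fdef n p phi beta r.
Proof.
  intros HM Hb Hr. rewrite fdef_exp by exact Hr.
  apply Rmult_lt_0_compat; [apply exp_pos |].
  pose proof (opp_le_RInt_integrand M r HM Hr). lra.
Qed.

Lemma fdef_lim_0 (M : R) : (1 <= n)%nat -> gam n p < 0 ->
  is_RInt_gen (integrand n p phi) (at_right 0) (at_point 1) M -> M < beta ->
  filterlim (fdef n p phi beta) (at_right 0) (locally 0).
Proof.
  intros Hn Hg HM Hb.
  apply (filterlim_le_le (fun _ => 0) _ (fun r => beta * exp (- gam n p * ln r)) 0).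
  - exists (mkposreal 1 Rlt_0_1). intros r Hr Hr0.
    change (Rabs (r - 0) < 1) in Hr. apply Rabs_def2 in Hr.
    split; [now apply Rlt_le, (fdef_pos M) |].
    rewrite fdef_exp, Rmult_comm by exact Hr0.
    pose proof (opp_le_RInt_integrand M r HM Hr0).
    pose proof (RInt_integrand_le_0 r ltac:(lra)).
    pose proof (opp_ln_lt_ln_psi n r Hn ltac:(lra)).
    apply Rmult_le_compat; [lra | apply Rlt_le, exp_pos | lra |].
    apply Rlt_le, exp_increasing. nra.
  - apply filterlim_const.
  - apply filterlim_scal_exp_mul_ln_0. lra.
Qed.

Lemma fdef_lim_p_infty (l : R) : gam n p < 0 -> is_lim phi p_infty l ->
  is_lim (fdef n p phi beta) p_infty (l / Rabs (gam n p)).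
Proof.
  intros Hg Hl. rewrite Rabs_left by exact Hg.
  pose proof (pos_INR n) as Hn.
  apply is_lim_ext_loc
    with (fun r => (RInt (integrand n p phi) 1 r + beta) / exp (- gam n p * ln_psi n r)).
  { exists 0. intros r Hr. rewrite fdef_exp by exact Hr. unfold Rdiv.
    rewrite <- exp_Ropp, Rmult_comm. do 3 f_equal. ring. }
  apply is_lim_div_p_infty_of_derive with (dF := integrand n p phi)
    (dH := fun r => - gam n p * ((r ^ 2 - INR n) / (r * (1 + r ^ 2)))
                    * exp (- gam n p * ln_psi n r)).
  - exists (INR n + 1). intros r Hr.
    split; [apply is_derive_RInt_integrand; lra |].
    split; [apply is_derive_exp_ln_psi; lra |].
    apply Rmult_lt_0_compat; [| apply exp_pos].
    apply Rmult_lt_0_compat; [lra | apply Rdiv_lt_0_compat; nra].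
  - apply is_lim_le_p_loc with (fun r => - gam n p * ln r).
    + exists 1. intros r Hr. pose proof (ln_le_ln_psi n r ltac:(lra)).
      pose proof (exp_ineq1_le (- gam n p * ln_psi n r)). nra.
    + replace p_infty with (Rbar_mult (- gam n p) p_infty) at 2.
      * apply is_lim_scal_l, is_lim_ln_p.
      * rewrite Rbar_mult_comm. apply is_Rbar_mult_unique, is_Rbar_mult_p_infty_pos.
        simpl. lra.
  - apply is_lim_ext_loc
      with (fun r => / (- gam n p) * (phi r * ((1 + r ^ 2) / (r ^ 2 - INR n)))).
    { exists (INR n + 1). intros r Hr. rewrite integrand_exp by lra.
      pose proof (exp_pos (- gam n p * ln_psi n r)). field. repeat split; nra. }
    replace (Finite (l / - gam n p)) with (Rbar_mult (/ - gam n p) (Rbar_mult l 1))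
      by (simpl; f_equal; field; lra).
    apply is_lim_scal_l, is_lim_mult; [exact Hl | apply is_lim_sq_ratio | exact I].
Qed.

End Integrand.

Theorem lemma4p1 (n : nat) (p : R) (phi : R -> R) (phiinf M beta : R)
  (Hn : (1 <= n)%nat)
  (Hp : p < - INR n - 1)
  (Hphi_nonneg : forall r, 0 <= r -> 0 <= phi r)
  (Hphi_pos : forall r, 0 < r -> 0 < phi r)
  (Hphi_cont : forall r, 0 < r -> continuous phi r)
  (Hphi_cont0 : filterlim phi (at_right 0) (locally (phi 0)))
  (Hphiinf : 0 < phiinf)
  (Hphi_lim : is_lim phi p_infty phiinf)
  (HM : is_RInt_gen (integrand n p phi) (at_right 0) (at_point 1) M)
  (Hbeta : M < beta) :
  (forall r, 0 < r -> ex_derive (fdef n p phi beta) r) /\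
  (forall r, 0 < r -> continuous (Derive (fdef n p phi beta)) r) /\
  (forall r, 0 < r -> 0 < fdef n p phi beta r) /\
  filterlim (fdef n p phi beta) (at_right 0) (locally 0) /\
  is_lim (fdef n p phi beta) p_infty (phiinf / Rabs (gam n p)).
Proof.
  pose proof (gam_neg n p Hp) as Hgam.
  split; [| split; [| split; [| split]]].
  - intros r Hr. eexists. now apply is_derive_fdef.
  - intros r Hr. now apply continuous_Derive_fdef.
  - intros r Hr. now apply (fdef_pos n p phi Hphi_cont Hphi_pos beta M).
  - now apply (fdef_lim_0 n p phi Hphi_cont Hphi_pos beta M).
  - now apply fdef_lim_p_infty.
Qed.
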